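(* Let $\mathbb{X}\subseteq\mathbb{R}^n$, let $\mathbb{Y}$ be a finite set of classes with $|\mathbb{Y}|\ge 2$, and let $D$ be a distribution on $\mathbb{X}\times\mathbb{Y}$ with joint density $p(\bm{x},k)$, marginal $p(\bm{x})=\sum_k p(\bm{x},k)$ and posterior $p(\mathrm{y}=k\mid\mathbf{x}=\bm{x})=p(\bm{x},k)/p(\bm{x})$. Fix a distance $d$ on $\mathbb{X}$ and $\epsilon>0$, and let $\mathbb{V}_{\bm{x}}=\{\bm{x'}: d(\bm{x},\bm{x'})\le\epsilon\}$. For a classifier $h:\mathbb{X}\to\mathbb{Y}$, $\operatorname{Rob}(h,\bm{x},y;\mathbb{V}_{\bm{x}})$ holds iff (i) no $\bm{x'}$ with $d(\bm{x},\bm{x'})\le\epsilon$ has $h(\bm{x'})\ne y$, and (ii) no $(\bm{x'},y')$ with $p(\bm{x'},y')>0$ and $d(\bm{x},\bm{x'})\le\epsilon$ has $h(\bm{x'})\neq y'$. Let $\zeta^\sharp_D=\inf_{h\text{ measurable}}\mathbb{E}_{(\mathbf{x},\mathrm{y})\sim D}[1-\mathbf{1}_{\operatorname{Rob}(h,\mathbf{x},\mathrm{y};\mathbb{V}_{\mathbf{x}})}]$ and let $\beta_D=\int(1-\max_k p(\mathrm{y}=k\mid\mathbf{x}=\bm{x}))\,p(\bm{x})\,d\bm{x}$ be the Bayes error. Then $$\zeta^\sharp_D\ \ge\ \frac{|\mathbb{Y}|}{|\mathbb{Y}|-1}\,\beta_D.$$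
   Context: $\zeta^\sharp_D$ is called the irreducible robustness error of $D$; $\beta_D$ is the Bayes error (the minimum misclassification probability over measurable classifiers). *)

From HB Require Import structures.
From mathcomp Require Import all_boot all_order all_algebra.
From mathcomp Require Import all_classical all_reals all_analysis.
Set Implicit Arguments. Unset Strict Implicit. Unset Printing Implicit Defensive.
Import Order.TTheory GRing.Theory Num.Theory.
Local Open Scope classical_set_scope.
Local Open Scope ring_scope.

(* Lebesgue measure on R^n, with R^n represented as n.-tuple R (product
   Borel sigma-algebra), defined by iterating the product measure:
   lambda_0 = Dirac mass at the empty tuple,
   lambda_{n+1} = pushforward of (lebesgue_measure \x lambda_n) under
                  (x, t) |-> x :: t. *)
Fixpoint lebesgue_Rn (R : realType) (n : nat) : set (n.-tuple R) -> \bar R :=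
  match n with
  | 0 => fun A => (\1_A [tuple] : R)%:E
  | n'.+1 => pushforward
               (product_measure1 (@lebesgue_measure R) (@lebesgue_Rn R n'))
               (fun p : R * n'.-tuple R => [tuple of p.1 :: p.2])
  end.

Local Open Scope ereal_scope.

Definition is_metric_on (T : Type) (R : realType) (X : set T) (d : T -> T -> R) :=
  forall x y z, X x -> X y -> X z ->
    [/\ (0 <= d x y)%R, d x y = 0%R <-> x = y, d x y = d y x
      & (d x z <= d x y + d y z)%R].

Definition marginal (T : Type) (R : realType) (Y : finType) (p : T -> Y -> R)
  (x : T) : R := (\sum_(k : Y) p x k)%R.

Definition posterior (T : Type) (R : realType) (Y : finType) (p : T -> Y -> R)
  (x : T) (k : Y) : R := (p x k / marginal p x)%R.

(* p is a joint density (w.r.t. Lebesgue measure on R^n times counting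
   measure on Y) of a probability distribution D on X * Y *)
Definition is_joint_density (R : realType) (n : nat) (X : set (n.-tuple R))
  (Y : finType) (p : n.-tuple R -> Y -> R) :=
  [/\ measurable X,
      (forall x k, X x -> (0 <= p x k)%R),
      (forall k, measurable_fun X (fun x => p x k))
    & \int[@lebesgue_Rn R n]_(x in X) (marginal p x)%:E = 1].

(* h : X -> Y is measurable (Y carries the discrete sigma-algebra) *)
Definition measurable_classifier (R : realType) (n : nat)
  (X : set (n.-tuple R)) (Y : finType) (h : n.-tuple R -> Y) :=
  forall k : Y, measurable (X `&` h @^-1` [set k]).

Definition Rob (T : Type) (R : realType) (Y : finType) (X : set T)
  (p : T -> Y -> R) (d : T -> T -> R) (eps : R) (h : T -> Y) (x : T) (y : Y)
  : Prop :=
  (forall x', X x' -> (d x x' <= eps)%R -> h x' = y) /\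
  (forall x' y', X x' -> (0 < p x' y')%R -> (d x x' <= eps)%R -> h x' = y').

Definition rob_error (R : realType) (n : nat) (X : set (n.-tuple R))
  (Y : finType) (p : n.-tuple R -> Y -> R) (d : n.-tuple R -> n.-tuple R -> R)
  (eps : R) (h : n.-tuple R -> Y) : \bar R :=
  \int[@lebesgue_Rn R n]_(x in X)
     (\sum_(k : Y) p x k * (1 - (`[< Rob X p d eps h x k >] : bool)%:R))%R%:E.

Definition irreducible_rob_error (R : realType) (n : nat) (X : set (n.-tuple R))
  (Y : finType) (p : n.-tuple R -> Y -> R) (d : n.-tuple R -> n.-tuple R -> R)
  (eps : R) : \bar R :=
  ereal_inf [set rob_error X p d eps h | h in [set h | @measurable_classifier R n X Y h]].

Definition bayes_error (R : realType) (n : nat) (X : set (n.-tuple R))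
  (Y : finType) (p : n.-tuple R -> Y -> R) : \bar R :=
  \int[@lebesgue_Rn R n]_(x in X)
     ((1 - \big[Num.max/0%R]_(k : Y) posterior p x k) * marginal p x)%R%:E.

From HB Require Import structures.
From mathcomp Require Import all_boot all_order all_algebra.
From mathcomp Require Import all_classical all_reals all_analysis.
Set Implicit Arguments. Unset Strict Implicit. Unset Printing Implicit Defensive.
Import Order.TTheory GRing.Theory Num.Theory.
Local Open Scope classical_set_scope.
Local Open Scope ring_scope.

(* Fix a classifier h and a point x, and write m for the marginal and M for the
   largest posterior at x.  If some label k is robust at x, then h x = k and
   every label of positive density at x equals h x, so the posterior is
   concentrated on k and the Bayes density (1 - M) m vanishes.  Otherwise the
   robustness-error density is m itself, and M >= 1/|Y| gives
   |Y|/(|Y|-1) (1 - M) m <= m.  The pointwise bound integrates to the claim for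
   every h, hence for the infimum. *)

(* [lebesgue_Rn] is only a set function, not a [{measure _}], so the library's
   integral lemmas do not apply to it; the scaled monotonicity of the integral
   we need holds for any nonnegative set function vanishing on [set0]. *)
Section nonnegative_set_function_integral.
Local Open Scope ereal_scope.
Context d (T : measurableType d) (R : realType).
Variable mu : set T -> \bar R.
Hypotheses (mu0 : mu set0 = 0) (mu_ge0 : forall A, 0 <= mu A).
Import HBNNSimple.

Definition nnintegral (F : T -> \bar R) := ereal_sup [set sintegral mu s |
  s in [set s : {nnsfun T >-> R} | forall x, (s x)%:E <= F x]].

Lemma sintegral_eq0 (f : T -> R) : f =1 cst 0%R -> sintegral mu f = 0.
Proof.
move=> f0; rewrite /sintegral fsbig1// => r _.
have [->|r0] := eqVneq r 0%R; first by rewrite mul0e.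
rewrite (_ : _ @^-1` _ = set0) ?mu0 ?mule0//.
by apply/seteqP; split => z //=; rewrite f0 => /esym/eqP; rewrite (negbTE r0).
Qed.

Lemma sintegral_cstM (r : R) (s : {nnsfun T >-> R}) :
  sintegral mu (cst r \* s)%R = r%:E * sintegral mu s.
Proof.
have [->|r0] := eqVneq r 0%R.
  by rewrite mul0e sintegral_eq0// => x /=; rewrite mul0r.
rewrite !sintegralET ge0_mule_fsumr; last first.
  move=> x; have [x_lt0|x_ge0] := ltP x 0%R; last exact: mule_ge0.
  by rewrite preimage_nnfun0// mu0 mule0.
rewrite (reindex_fsbigT ( *%R r))/=; last first.
  by exists ( *%R r^-1); [exact: mulKf|exact: mulVKf].
apply: eq_fsbigr => x.
by rewrite preimage_cstM// [(_ / r)%R]mulrC mulKf// muleA.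
Qed.

Lemma nnintegral_cst0 : nnintegral (cst 0%E) = 0.
Proof.
apply/eqP; rewrite eq_le; apply/andP; split.
  apply/ge_ereal_sup => _ [s /= s0 <-]; rewrite sintegral_eq0// => x.
  by apply/eqP; rewrite eq_le -!lee_fin s0 /= lee_fin fun_ge0.
apply: ereal_sup_ubound; exists nnsfun0 => //.
by rewrite sintegral_eq0.
Qed.

Lemma ge0_integral_nnintegralE D F : (forall x, D x -> 0 <= F x) ->
  \int[mu]_(x in D) F x = nnintegral (F \_ D).
Proof.
move=> F0.
change (nnintegral ((F \_ D)^\+) - nnintegral ((F \_ D)^\-)
  = nnintegral (F \_ D)).
rewrite funepos_restrict funeneg_restrict.
have /eq_restrictP-> := ge0_funeposE F0.
have /eq_restrictP-> := ge0_funenegE F0.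
by rewrite erestrict0 nnintegral_cst0 sube0.
Qed.

Lemma le_nnintegralZl (c : R) F G : (0 <= c)%R -> (forall x, 0 <= F x) ->
  (forall x, c%:E * F x <= G x) -> c%:E * nnintegral F <= nnintegral G.
Proof.
move=> c_ge0 F0 cFG; rewrite /nnintegral -ereal_supZl//; last first.
  by apply/set0P; exists (sintegral mu nnsfun0); exists nnsfun0.
apply/ge_ereal_sup => _ [_ [s sF <-] <-].
apply: ereal_sup_ubound.
exists (scale_nnsfun s c_ge0); last exact: sintegral_cstM.
by move=> x /=; rewrite EFinM (le_trans _ (cFG x))// lee_wpmul2l ?lee_fin.
Qed.

Lemma ge0_le_integralZl D (c : R) F G : (0 <= c)%R ->
  (forall x, D x -> 0 <= F x) -> (forall x, D x -> c%:E * F x <= G x) ->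
  c%:E * \int[mu]_(x in D) F x <= \int[mu]_(x in D) G x.
Proof.
move=> c_ge0 F0 cFG.
have G0 x : D x -> 0 <= G x.
  by move=> Dx; rewrite (le_trans _ (cFG x Dx)) ?mule_ge0 ?F0.
rewrite !ge0_integral_nnintegralE//.
apply: le_nnintegralZl => // x; rewrite /patch.
  by case: ifPn => // /[!inE]; exact: F0.
by case: ifPn => [/[!inE]|]; [exact: cFG|rewrite mule0].
Qed.

End nonnegative_set_function_integral.

Lemma lebesgue_Rn_set0 (R : realType) (n : nat) : @lebesgue_Rn R n set0 = 0%E.
Proof.
elim: n => [|n IHn] /=; first by rewrite indic0.
rewrite /pushforward preimage_set0; apply: integral0_eq => x _ /=.
by rewrite xsection0 IHn.
Qed.

Lemma lebesgue_Rn_ge0 (R : realType) (n : nat) A : (0 <= @lebesgue_Rn R n A)%E.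
Proof.
elim: n A => [|n IHn] A /=; first by rewrite lee_fin indicE.
by apply: integral_ge0 => x _; exact: IHn.
Qed.

Section bayes_pointwise.
Variables (T : Type) (R : realType) (Y : finType) (p : T -> Y -> R) (x : T).
Hypothesis p_ge0 : forall k, 0 <= p x k.

Local Notation m := (marginal p x).
Local Notation M := (\big[Num.max/0]_(k : Y) posterior p x k).

Lemma marginal_ge0 : 0 <= m.
Proof. by apply: sumr_ge0 => k _; exact: p_ge0. Qed.

Lemma le_marginal k : p x k <= m.
Proof.
by rewrite /marginal (bigD1 k)//= lerDl; apply: sumr_ge0 => i _; exact: p_ge0.
Qed.

Lemma max_posterior_le1 : M <= 1.
Proof.
apply/bigmax_leP; split => // k _; rewrite /posterior.
have [->|m_neq0] := eqVneq m 0; first by rewrite invr0 mulr0.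
by rewrite ler_pdivrMr ?mul1r ?le_marginal// lt_def m_neq0 marginal_ge0.
Qed.

Lemma bayes_term_ge0 : 0 <= (1 - M) * m.
Proof. by rewrite mulr_ge0 ?subr_ge0 ?max_posterior_le1 ?marginal_ge0. Qed.

Lemma sum_posterior : m != 0 -> \sum_(k : Y) posterior p x k = 1.
Proof. by move=> m_neq0; rewrite -mulr_suml mulfV. Qed.

Lemma max_posterior_ge : m != 0 -> 1 <= #|Y|%:R * M.
Proof.
move=> m_neq0; rewrite -[leLHS](sum_posterior m_neq0) mulr_natl -sumr_const.
by apply: ler_sum => k _; exact: le_bigmax.
Qed.

Lemma bayes_term_le_marginal : (1 < #|Y|)%N ->
  #|Y|%:R / (#|Y|%:R - 1) * ((1 - M) * m) <= m.
Proof.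
move=> Y_gt1; have [->|m_neq0] := eqVneq m 0; first by rewrite !mulr0.
have Y1_gt0 : 0 < #|Y|%:R - 1 :> R by rewrite subr_gt0 ltr1n.
rewrite mulrA ler_piMl ?marginal_ge0// mulrAC ler_pdivrMr// mul1r.
by rewrite mulrBr mulr1 lerD2l lerN2 max_posterior_ge.
Qed.

Lemma bayes_term_eq0 k0 : (forall k, k != k0 -> p x k = 0) -> (1 - M) * m = 0.
Proof.
move=> p_eq0; have [->|m_neq0] := eqVneq m 0; first by rewrite mulr0.
suff -> : M = 1 by rewrite subrr mul0r.
apply/eqP; rewrite eq_le max_posterior_le1 (le_trans _ (le_bigmax _ _ k0))//.
have m_eq : m = p x k0 by rewrite /marginal (bigD1 k0)//= big1 ?addr0.
by rewrite /posterior -m_eq mulfV.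
Qed.

End bayes_pointwise.

Section robust_pointwise.
Variables (T : Type) (R : realType) (Y : finType) (X : set T).
Variables (p : T -> Y -> R) (d : T -> T -> R) (eps : R) (h : T -> Y) (x : T).
Hypotheses (Xx : X x) (dxx : d x x <= eps) (p_ge0 : forall k, 0 <= p x k).

Local Notation rob_term :=
  (\sum_(k : Y) p x k * (1 - (`[< Rob X p d eps h x k >] : bool)%:R)).

Lemma Rob_density_eq0 k0 : Rob X p d eps h x k0 ->
  forall k, k != k0 -> p x k = 0.
Proof.
move=> [hV hsupp] k; apply: contraNeq => pk_neq0.
have pk_gt0 : 0 < p x k by rewrite lt_def pk_neq0 p_ge0.
by rewrite -(hsupp x k Xx pk_gt0 dxx) (hV x Xx dxx).
Qed.

Lemma rob_term_ge0 : 0 <= rob_term.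
Proof.
by apply: sumr_ge0 => k _; case: asboolP; rewrite ?subrr ?mulr0 ?subr0 ?mulr1.
Qed.

Lemma rob_term_eq_marginal : (forall k, ~ Rob X p d eps h x k) ->
  rob_term = marginal p x.
Proof.
move=> notRob; apply: eq_bigr => k _.
by case: asboolP => [/notRob//|_]; rewrite subr0 mulr1.
Qed.

Lemma bayes_term_le_rob_term : (1 < #|Y|)%N ->
  #|Y|%:R / (#|Y|%:R - 1) *
    ((1 - \big[Num.max/0]_(k : Y) posterior p x k) * marginal p x) <= rob_term.
Proof.
move=> Y_gt1.
have [[k0 Rob_k0]|notRob] := pselect (exists k, Rob X p d eps h x k).
  have p_eq0 := Rob_density_eq0 Rob_k0.
  by rewrite (bayes_term_eq0 p_ge0 p_eq0) mulr0 rob_term_ge0.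
rewrite rob_term_eq_marginal; last by move=> k Rob_k; apply: notRob; exists k.
exact: bayes_term_le_marginal.
Qed.

End robust_pointwise.

Theorem corollary1 (R : realType) (n : nat) (X : set (n.-tuple R))
  (Y : finType) (p : n.-tuple R -> Y -> R)
  (d : n.-tuple R -> n.-tuple R -> R) (eps : R) :
  (2 <= #|Y|)%N ->
  is_joint_density X p ->
  is_metric_on X d ->
  0 < eps ->
  ((#|Y|%:R / (#|Y|%:R - 1))%:E * bayes_error X p
     <= irreducible_rob_error X p d eps)%E.
Proof.
move=> Y_gt1 [_ p_ge0 _ _] d_metric eps_gt0.
have dxx x : X x -> d x x <= eps.
  move=> Xx; have [_ [_ /(_ erefl) -> _] _] := d_metric x x x Xx Xx Xx.
  exact: ltW.
apply: le_ereal_inf_tmp => _ [h _ <-].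
apply: ge0_le_integralZl.
- exact: lebesgue_Rn_set0.
- exact: lebesgue_Rn_ge0.
- by rewrite divr_ge0 ?subr_ge0 ?ler1n// ltnW.
- by move=> x Xx; rewrite lee_fin bayes_term_ge0 // => k; exact: p_ge0.
- move=> x Xx; rewrite -EFinM lee_fin.
  rewrite (bayes_term_le_rob_term h Xx (dxx x Xx))//.
  by move=> k; exact: p_ge0.
Qed.
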